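(* Tight GFG-NSWs and tight GFG-NRWs are weak-type: every tight GFG-NSW and every tight GFG-NRW $\mathcal{A}=\langle\Sigma,Q,Q_0,\delta,\alpha\rangle$ whose language is recognized by some GFG-NWW has an equivalent GFG-NWW on the same structure, i.e. there is $\alpha'\subseteq Q$ such that $\langle\Sigma,Q,Q_0,\delta,\alpha'\rangle$ is a weak automaton, is GFG, and recognizes $L(\mathcal{A})$.
   Context: An automaton $\langle\Sigma,Q,Q_0,\delta,\alpha\rangle$ has $\delta:Q\times\Sigma\to2^Q$; runs are accepting if the set $S$ of infinitely visited states satisfies $\alpha$. Rabin ($\alpha$ a set of pairs $\langle E,F\rangle$): some pair has $S\cap E=\emptyset$, $S\cap F\ne\emptyset$; Streett: every pair has $S\cap E=\emptyset$ or $S\cap F\ne\emptyset$; Büchi ($\alpha\subseteq Q$): $S\cap\alpha\ne\emptyset$. A Büchi automaton is weak if each strongly connected component $C$ satisfies $C\subseteq\alpha$ or $C\cap\alpha=\emptyset$. NSW/NRW/NWW: nondeterministic Streett/Rabin/weak word automaton. $\mathcal{A}$ is GFG if there is a strategy $g:\Sigma^*\to Q$ such that for every $w=a_1a_2\cdots$, $g(\epsilon),g(a_1),g(a_1a_2),\ldots$ is a run on $w$, accepting whenever $w\in L(\mathcal{A})$. Finite-state strategies are transducers $g=\langle\Sigma,Q,M,m_0,\rho,\tau\rangle$ (finite memories $M$, $\rho:M\times\Sigma\to M$ extended to words from $m_0$, $\tau:M\to Q$, $g(u)=\tau(\rho(u))$); $m$ is a memory of $q$ if $\tau(m)=q$.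 $\mathcal{A}_g=\langle\Sigma,M,m_0,\rho,\alpha_g\rangle$ where $\alpha_g$ replaces each set $F$ in $\alpha$ by $\{m\mid\tau(m)\in F\}$. A transition $\langle q,a,q'\rangle$ is used by $g$ if $q=g(u)$, $q'=g(ua)$ for some $u$. A combination of paths from a set $P$ of finite paths is the union of the element sets of a nonempty subset of $P$. For memories $m\neq m'$ with $\tau(m)=\tau(m')$, $m$ is replaceable by $m'$ if the set of paths of $\mathcal{A}_g$ from $m'$ to $m$ is empty or all its combinations are accepting. $\mathcal{A}$ is tight if for some finite-state strategy $g$ witnessing its GFGness, every transition is used by $g$ and no memory is replaceable by a different memory of the same state. *)

From mathcomp Require Import all_boot.
Set Implicit Arguments. Unset Strict Implicit. Unset Printing Implicit Defensive.

Inductive acond (Q : finType) :=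
  | Rabin of seq ({set Q} * {set Q})
  | Streett of seq ({set Q} * {set Q})
  | Buchi of {set Q}.

(* S is the set of infinitely visited states, given as a predicate. *)
Definition acc_set (Q : finType) (c : acond Q) (S : Q -> Prop) : Prop :=
  match c with
  | Rabin ps => exists2 p, p \in ps &
       (forall q, q \in p.1 -> ~ S q) /\ (exists q, q \in p.2 /\ S q)
  | Streett ps => forall p, p \in ps ->
       (forall q, q \in p.1 -> ~ S q) \/ (exists q, q \in p.2 /\ S q)
  | Buchi F => exists q, q \in F /\ S q
  end.

Definition map_cond (M Q : finType) (f : M -> Q) (c : acond Q) : acond M :=
  match c with
  | Rabin ps => Rabin [seq ([set m | f m \in p.1], [set m | f m \in p.2]) | p : {set Q} * {set Q} <- ps]
  | Streett ps => Streett [seq ([set m | f m \in p.1], [set m | f m \in p.2]) | p : {set Q} * {set Q} <- ps]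
  | Buchi F => Buchi [set m | f m \in F]
  end.

Record aut (Sigma Q : finType) := Aut {
  init : {set Q};
  delta : Q -> Sigma -> {set Q};
  acc : acond Q }.

Definition is_streett (S Q : finType) (A : aut S Q) :=
  if acc A is Streett _ then true else false.
Definition is_rabin (S Q : finType) (A : aut S Q) :=
  if acc A is Rabin _ then true else false.

Definition inf_often (Q : Type) (r : nat -> Q) (q : Q) : Prop :=
  forall n, exists m, n <= m /\ r m = q.

Definition is_run (S Q : finType) (A : aut S Q) (w : nat -> S) (r : nat -> Q) :=
  r 0 \in init A /\ forall i, r i.+1 \in delta A (r i) (w i).

Definition accepting (S Q : finType) (A : aut S Q) (r : nat -> Q) :=
  acc_set (acc A) (inf_often r).

Definition lang (S Q : finType) (A : aut S Q) (w : nat -> S) : Prop :=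
  exists r, is_run A w r /\ accepting A r.

(* prefix a_1 ... a_n of w (w 0 is the first letter) *)
Definition prefix (S : Type) (w : nat -> S) (n : nat) : seq S := mkseq w n.

Definition gfg_strategy (S Q : finType) (A : aut S Q) (g : seq S -> Q) :=
  forall w : nat -> S,
    is_run A w (fun n => g (prefix w n)) /\
    (lang A w -> accepting A (fun n => g (prefix w n))).

Definition GFG (S Q : finType) (A : aut S Q) := exists g, gfg_strategy A g.

Definition edge (S Q : finType) (A : aut S Q) : rel Q :=
  fun q q' => [exists a, q' \in delta A q a].

Definition scc (S Q : finType) (A : aut S Q) (q : Q) : {set Q} :=
  [set q' | connect (edge A) q q' && connect (edge A) q' q].

Definition weak (S Q : finType) (A : aut S Q) : Prop :=
  match acc A with
  | Buchi F => forall q, scc A q \subset F \/ [disjoint scc A q & F]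
  | _ => False
  end.

Definition tstrat (S Q M : finType) (m0 : M) (rho : M -> S -> M) (tau : M -> Q)
  : seq S -> Q := fun u => tau (foldl rho m0 u).

(* finite paths of A_g from m1 to m2, as sequences of memories *)
Definition mpath (S M : finType) (rho : M -> S -> M) (m1 m2 : M) (p : seq M) :=
  exists s, p = m1 :: s /\ path (fun x y => [exists a, rho x a == y]) m1 s
            /\ last m1 s = m2.

Definition combination (M : finType) (P : seq M -> Prop) (C : {set M}) :=
  exists P' : seq M -> Prop, (forall p, P' p -> P p) /\ (exists p, P' p) /\
     (forall x, x \in C <-> exists p, P' p /\ x \in p).

Definition replaceable (S Q M : finType) (alpha : acond Q)
    (rho : M -> S -> M) (tau : M -> Q) (m m' : M) :=
  m != m' /\ tau m = tau m' /\
  ((forall p, ~ mpath rho m' m p) \/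
   (forall C, combination (mpath rho m' m) C ->
      acc_set (map_cond tau alpha) (fun x => x \in C))).

Definition tight (S Q : finType) (A : aut S Q) : Prop :=
  exists (M : finType) (m0 : M) (rho : M -> S -> M) (tau : M -> Q),
    let g := tstrat m0 rho tau in
    gfg_strategy A g /\
    (forall q a q', q' \in delta A q a ->
        exists u, g u = q /\ g (rcons u a) = q') /\
    (forall m m', ~ replaceable (acc A) rho tau m m').

Definition GFG_NWW_recognizable (S Q : finType) (A : aut S Q) : Prop :=
  exists (Q' : finType) (B : aut S Q'),
    weak B /\ GFG B /\ forall w, lang B w <-> lang A w.

(* Fix a finite-state strategy g = (M, m0, rho, tau) witnessing tightness and a weak GFG
   automaton B recognizing L(A).  Call a state good when it is the state of a reachable memory
   lying on an accepting loop of A_g; the good states form alpha'.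

   Pumping words through B shows that, at a reachable memory, adding further loops to a
   nonempty loop never changes whether it is accepting: otherwise the run of B would visit
   accepting and rejecting states infinitely often, which a weak automaton cannot do.  Hence the
   memories recurring in an accepting run of A_g lie on no rejecting loop.  Tightness makes all
   memories of the states of one SCC mutually reachable in A_g, so goodness is constant on SCCs
   and alpha' is weak.  A word accepted by A makes g visit a good state infinitely often, so g
   also witnesses that the Buchi automaton with alpha' is GFG.  Conversely, if a run on w visits
   a good state q infinitely often but w is rejected, interleave segments of that run between
   visits to q with an accepting loop at q through all its recurring states: A accepts the
   resulting word, yet the run of g on it meets memories on rejecting loops infinitely often. *)

From Pilot Require Import Defs.
From mathcomp Require Import all_boot.
From Stdlib Require Import Classical ClassicalEpsilon.
Set Implicit Arguments. Unset Strict Implicit. Unset Printing Implicit Defensive.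
Local Notation prefix := Defs.prefix.

Definition classicb (P : Prop) : bool := if excluded_middle_informative P then true else false.

Lemma classicbP (P : Prop) : reflect P (classicb P).
Proof. by rewrite /classicb; case: excluded_middle_informative => H; constructor. Qed.

(** * Infinite sequences over finite types *)

Lemma finite_uniform_bound (T : finType) (P : T -> nat -> Prop) :
  (forall x, exists n, forall m, n <= m -> P x m) ->
  exists n, forall x m, n <= m -> P x m.
Proof.
move=> HP; suff [n Hn] : exists n, forall x, x \in enum T -> forall m, n <= m -> P x m.
  by exists n => x; apply: Hn; rewrite mem_enum.
elim: (enum T) => [|x s [n Hn]]; first by exists 0.
have [nx Hnx] := HP x; exists (maxn nx n) => y; rewrite inE => /predU1P [-> | Hy] m Hm.
  by apply: Hnx; apply: leq_trans Hm; apply: leq_maxl.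
by apply: Hn => //; apply: leq_trans Hm; apply: leq_maxr.
Qed.

Lemma not_inf_often (T : Type) (f : nat -> T) x :
  ~ inf_often f x -> exists n, forall m, n <= m -> f m <> x.
Proof.
move=> Hx; apply: NNPP => Hn; apply: Hx => n; apply: NNPP => Hm; apply: Hn.
by exists n => m Hnm Hfm; apply: Hm; exists m.
Qed.

Section InfOften.
Variables (T : finType) (f : nat -> T).

Lemma eventually_inf_often : exists N, forall i, N <= i -> inf_often f (f i).
Proof.
have [N HN] : exists N, forall x m, N <= m -> ~ inf_often f x -> f m <> x.
  apply: (finite_uniform_bound (P := fun x m => ~ inf_often f x -> f m <> x)) => x.
  case: (classic (inf_often f x)) => Hx; first by exists 0.
  by have [n Hn] := not_inf_often Hx; exists n => m Hm _; apply: Hn.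
by exists N => i Hi; apply: NNPP => Hn; apply: (HN _ _ Hi Hn).
Qed.

Lemma inf_often_pigeonhole (P : T -> Prop) :
  (forall n, exists k, n <= k /\ P (f k)) -> exists x, P x /\ inf_often f x.
Proof.
have [N HN] := eventually_inf_often; move=> /(_ N) [k [Hk Pk]].
by exists (f k); split => //; apply: HN.
Qed.

Lemma inf_often_window x : inf_often f x ->
  exists i j, [/\ i < j, f i = x, f j = x &
    forall y, inf_often f y <-> exists2 k, i <= k < j & f k = y].
Proof.
move=> Hx; have [N HN] := eventually_inf_often; have [i [Hi Hfi]] := Hx N.
have [b Hb] : exists b, forall y m, b <= m -> inf_often f y ->
    exists2 k, i <= k < m & f k = y.
  apply: (finite_uniform_bound
    (P := fun y m => inf_often f y -> exists2 k, i <= k < m & f k = y)) => y.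
  case: (classic (inf_often f y)) => Hy; last by exists 0 => m _ /Hy.
  have [k [Hk Hfk]] := Hy i; exists k.+1 => m Hm _; exists k => //.
  by rewrite Hk.
have [j [Hj Hfj]] := Hx (maxn b i.+1).
exists i, j; split => //; first by apply: leq_trans Hj; apply: leq_maxr.
move=> y; split; first by apply: Hb; apply: leq_trans Hj; apply: leq_maxl.
by case=> k /andP [Hik _] <-; apply: HN; apply: leq_trans Hik.
Qed.

Lemma inf_often_map (U : Type) (h : T -> U) u :
  inf_often (fun n => h (f n)) u <-> exists x, inf_often f x /\ h x = u.
Proof.
split; first by move/(inf_often_pigeonhole (P := fun x => h x = u)) => [x []]; exists x.
by case=> x [Hx <-] n; have [k [Hk <-]] := Hx n; exists k.
Qed.

End InfOften.

Lemma inf_often_shift (T : Type) (f f' : nat -> T) n :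
  (forall i, f (i + n) = f' i) -> forall x, inf_often f x <-> inf_often f' x.
Proof.
move=> Hf x; split=> Hx k.
- have [m [Hm <-]] := Hx (k + n).
  have Hnm : n <= m by apply: leq_trans Hm; apply: leq_addl.
  by exists (m - n); rewrite -Hf subnK // leq_subRL // addnC.
- have [m [Hm <-]] := Hx k; exists (m + n); rewrite Hf; split => //.
  by apply: leq_trans Hm (leq_addr _ _).
Qed.
(** * Acceptance conditions, words and runs *)

Lemma acc_set_ext (Q : finType) (c : acond Q) (X Y : Q -> Prop) :
  (forall q, X q <-> Y q) -> acc_set c X -> acc_set c Y.
Proof.
move=> XY; case: c => [ps|ps|F] /=.
- case=> p Hp [HE [q [Hq Xq]]]; exists p => //; split; last by exists q; rewrite -XY.
  by move=> q' /HE; rewrite XY.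
- move=> H p /H [HE|[q [Hq Xq]]]; [left|right; exists q; rewrite -XY //].
  by move=> q' /HE; rewrite XY.
- by case=> q [Hq Xq]; exists q; rewrite -XY.
Qed.

Section MapCond.
Variables (M Q : finType) (f : M -> Q) (X : M -> Prop).

Let preim_meet (E : {set Q}) :
  (exists m, m \in [set m | f m \in E] /\ X m) <-> (exists q, q \in E /\ exists m, X m /\ f m = q).
Proof.
split=> [[m [Hm Xm]] | [q [Hq [m [Xm Hm]]]]]; last by exists m; rewrite inE Hm.
by exists (f m); split; [rewrite inE in Hm | exists m].
Qed.

Let preim_avoid (E : {set Q}) :
  (forall m, m \in [set m | f m \in E] -> ~ X m) <->
  (forall q, q \in E -> ~ exists m, X m /\ f m = q).
Proof.
split=> [H q Hq [m [Xm Hm]] | H m]; first by apply: (H m) => //; rewrite inE Hm.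
by rewrite inE => Hm Xm; apply: (H _ Hm); exists m.
Qed.

Lemma acc_set_map_cond (c : acond Q) :
  acc_set (map_cond f c) X <-> acc_set c (fun q => exists m, X m /\ f m = q).
Proof.
case: c => [ps|ps|F] /=; last exact: preim_meet.
- split=> [[_ /mapP [p Hp ->]] [/preim_avoid HE /preim_meet HF] |
            [p Hp] [/preim_avoid HE /preim_meet HF]]; first by exists p.
  by exists ([set m | f m \in p.1], [set m | f m \in p.2]); [apply: map_f|].
- split=> H p Hp.
    by case: (H _ (map_f _ Hp)) => [/preim_avoid|/preim_meet]; [left|right].
  case/mapP: Hp => p' Hp' ->.
  by case: (H p' Hp') => [/preim_avoid|/preim_meet]; [left|right].
Qed.

End MapCond.
Section Words.
Variable X : Type.
Implicit Types (w t : nat -> X) (u v : seq X).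

Lemma size_prefix w n : size (prefix w n) = n.
Proof. exact: size_mkseq. Qed.

Lemma prefixD w i l : prefix w (i + l) = prefix w i ++ prefix (fun k => w (i + k)) l.
Proof.
rewrite /prefix /mkseq iotaD map_cat add0n -{2}[i]addn0 iotaDl -map_comp.
by congr (_ ++ _); apply: eq_map => k /=; rewrite addn0.
Qed.

Lemma prefixS w n : prefix w n.+1 = rcons (prefix w n) (w n).
Proof. exact: mkseqS. Qed.

Lemma take_prefix w l n : l <= n -> take l (prefix w n) = prefix w l.
Proof. by move/subnKC <-; rewrite prefixD take_size_cat // size_prefix. Qed.

Definition cat_word u t : nat -> X :=
  fun i => if i < size u then nth (t 0) u i else t (i - size u).

Lemma cat_wordDr u t i : cat_word u t (size u + i) = t i.
Proof. by rewrite /cat_word ltnNge leq_addr /= addKn. Qed.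

Lemma prefix_cat_word u t n : prefix (cat_word u t) (size u + n) = u ++ prefix t n.
Proof.
rewrite prefixD; congr (_ ++ _); last by apply: eq_mkseq => k; apply: cat_wordDr.
apply: (@eq_from_nth _ (t 0)) => [|i]; rewrite size_prefix // => Hi.
by rewrite nth_mkseq // /cat_word Hi.
Qed.

Lemma cat_word_cat u v t i : cat_word (u ++ v) t i = cat_word u (cat_word v t) i.
Proof.
rewrite /cat_word size_cat nth_cat; case: (ltnP i (size u)) => Hu.
  by rewrite ltn_addr //; apply: set_nth_default.
by rewrite ltn_subLR // subnDA.
Qed.

Fixpoint seqpow u n : seq X := if n is n'.+1 then seqpow u n' ++ u else [::].

Lemma size_seqpow u n : size (seqpow u n) = n * size u.
Proof. by elim: n => //= n IH; rewrite size_cat IH mulSn addnC. Qed.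

End Words.

Section Blocks.
Variables (Y : Type) (F : nat -> Y) (b : nat -> nat).
Hypothesis b_incr : forall s, b s < b s.+1.

Lemma block_bound s : s <= b s.
Proof. by elim: s => // s IH; apply: leq_ltn_trans IH (b_incr s). Qed.

Lemma block_cover k : b 0 <= k -> exists s, b s <= k < b s.+1.
Proof.
move=> Hk; suff : forall n, k < b n -> exists s, b s <= k < b s.+1.
  by apply; apply: leq_ltn_trans (block_bound k) (b_incr k).
elim=> [|n IH Hn]; first by rewrite ltnNge Hk.
by case: (ltnP k (b n)) => [/IH|Hn']; last by exists n; apply/andP.
Qed.

Lemma often_of_blocks (P : Y -> Prop) :
  (forall s, exists2 k, b s <= k < b s.+1 & P (F k)) -> forall n, exists k, n <= k /\ P (F k).
Proof.
move=> HP n; have [k /andP [Hk _] Pk] := HP n; exists k; split => //.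
exact: leq_trans (block_bound n) Hk.
Qed.

Lemma inf_often_blocks (C : Y -> Prop) :
  (forall s y, C y -> exists2 k, b s <= k < b s.+1 & F k = y) ->
  (forall s k, b s <= k < b s.+1 -> C (F k)) ->
  forall y, inf_often F y <-> C y.
Proof.
move=> Hhit Hin y; split => [Hy|Cy].
  by have [k [Hk <-]] := Hy (b 0); have [s Hs] := block_cover Hk; apply: Hin Hs.
by apply: (often_of_blocks (P := fun z => z = y)) => s; apply: Hhit.
Qed.

End Blocks.

Section LimitWord.
Variables (X St : Type) (x0 : X) (ext : seq X -> St -> seq X * St).
Variables (P0 : seq X) (s0 : St).

Fixpoint stage (n : nat) : seq X * St :=
  if n is n'.+1 then
    let: (P, s) := stage n' in let: (e, s') := ext P s in (P ++ e, s')
  else (P0, s0).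

(* The default [x0] is never read when all blocks are nonempty. *)
Definition limit_word : nat -> X := fun i => nth x0 (stage i.+1).1 i.

Hypothesis ext_nonempty : forall P s, 0 < size (ext P s).1.

Lemma stageS n : stage n.+1 = ((stage n).1 ++ (ext (stage n).1 (stage n).2).1,
                                (ext (stage n).1 (stage n).2).2).
Proof. by rewrite /=; case: (stage n) => P s; case: (ext P s). Qed.

Lemma size_stage_incr n : size (stage n).1 < size (stage n.+1).1.
Proof. by rewrite stageS size_cat -addn1 leq_add2l ext_nonempty. Qed.

Lemma size_stage_ge n : n <= size (stage n).1.
Proof. exact: (block_bound (b := fun n => size (stage n).1) size_stage_incr). Qed.

Lemma stage_catr m n : m <= n -> exists e, (stage n).1 = (stage m).1 ++ e.
Proof.
move/subnK => <-; elim: (n - m) => [|k [e IH]]; first by exists [::]; rewrite cats0.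
by rewrite addSn stageS IH -catA; eexists.
Qed.

Lemma limit_word_nth n i : i < size (stage n).1 -> limit_word i = nth x0 (stage n).1 i.
Proof.
move=> Hi; have Hi1 : i < size (stage i.+1).1 by apply: size_stage_ge.
rewrite /limit_word; case: (leqP i.+1 n) => [/stage_catr|/ltnW/stage_catr] [e ->].
  by rewrite nth_cat Hi1.
by rewrite nth_cat Hi.
Qed.

Lemma limit_word_prefix n k : k <= size (stage n).1 ->
  prefix limit_word k = take k (stage n).1.
Proof.
move=> Hk; apply: (@eq_from_nth _ x0) => [|i]; rewrite size_prefix.
  by rewrite size_take; case: ltngtP Hk => // ->.
move=> Hi; rewrite nth_mkseq // nth_take // (@limit_word_nth n) //.
exact: leq_trans Hi Hk.
Qed.

Lemma limit_word_block s j : j < size (ext (stage s).1 (stage s).2).1 ->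
  limit_word (size (stage s).1 + j) = nth x0 (ext (stage s).1 (stage s).2).1 j.
Proof.
move=> Hj; rewrite (limit_word_nth (n := s.+1)) stageS ?size_cat ?ltn_add2l //.
by rewrite nth_cat ltnNge leq_addr /= addKn.
Qed.

End LimitWord.

Section Runs.
Variables (S Q : finType) (A : aut S Q).

Definition accepts_from (q : Q) (t : nat -> S) : Prop :=
  exists r, [/\ r 0 = q, forall i, r i.+1 \in delta A (r i) (t i) & accepting A r].

Lemma accepts_from_ext q t t' : t =1 t' -> accepts_from q t -> accepts_from q t'.
Proof. by move=> E [r [H0 Hr Ha]]; exists r; split => // i; rewrite -E. Qed.

Lemma lang_ext w w' : w =1 w' -> lang A w -> lang A w'.
Proof. by move=> E [r [[H0 Hr] Ha]]; exists r; split => //; split => // i; rewrite -E. Qed.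

Lemma lang_of_accepts_from w r n : r 0 \in init A ->
  (forall i, r i.+1 \in delta A (r i) (w i)) ->
  accepts_from (r n) (fun i => w (i + n)) -> lang A w.
Proof.
move=> H0 Hr [r' [H0' Hr' Ha]].
exists (fun i => if i < n then r i else r' (i - n)); split; first split.
- by case: posnP => [n0|//]; rewrite n0 /= H0' n0.
- move=> i; case: (ltngtP i.+1 n) => [Hi|Hi|Hin].
  + exact: Hr.
  + by rewrite subSn //; have := Hr' (i - n); rewrite subnK.
  + by rewrite -Hin subnn H0' -Hin; apply: Hr.
- apply: acc_set_ext Ha => q; apply: iff_sym; apply: (inf_often_shift (n := n)) => i.
  by rewrite ltnNge leq_addl /= addnK.
Qed.

(* Finite paths of [A] are sequences of (letter, target state) pairs. *)
Definition astep : rel (S * Q) := fun p p' => p'.2 \in delta A p.2 p'.1.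

Lemma run_of_paths (W : nat -> S * Q) (p0 : S * Q) : p0.2 \in init A ->
  (forall n, path astep p0 (prefix W n)) ->
  is_run A (fun i => (W i).1) (fun i => (last p0 (prefix W i)).2).
Proof.
move=> H0 Hp; split => // i.
by have := Hp i.+1; rewrite prefixS rcons_path last_rcons => /andP [].
Qed.

Definition run_segment (w : nat -> S) (r : nat -> Q) (n d : nat) : seq (S * Q) :=
  [seq (w i, r i.+1) | i <- iota n d].

Lemma map_fst_run_segment w r n d : map fst (run_segment w r n d) = prefix (fun i => w (i + n)) d.
Proof.
rewrite /run_segment /prefix /mkseq.
have -> : iota n d = map (addn n) (iota 0 d) by rewrite -iotaDl addn0.
by rewrite -!map_comp; apply: eq_map => i /=; rewrite addnC.
Qed.

Lemma size_run_segment w r n d : size (run_segment w r n d) = d.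
Proof. by rewrite size_map size_iota. Qed.

Lemma path_run_segment w r n d p : (forall i, r i.+1 \in delta A (r i) (w i)) -> p.2 = r n ->
  path astep p (run_segment w r n d) /\ (last p (run_segment w r n d)).2 = r (n + d).
Proof.
move=> Hr; elim: d n p => [|d IH] n p Hp /=; first by rewrite addn0.
by have [Hpath Hl] := IH n.+1 (w n, r n.+1) erefl; rewrite /astep /= Hp Hr Hpath addnS.
Qed.

Lemma run_segment_states w r n d p : p \in run_segment w r n d ->
  exists i, n <= i /\ p.2 = r i.+1.
Proof. by case/mapP => i; rewrite mem_iota => /andP [Hi _] ->; exists i. Qed.

End Runs.

Lemma connect_run (S Q : finType) (A : aut S Q) (w : nat -> S) (r : nat -> Q) :
  (forall i, r i.+1 \in delta A (r i) (w i)) ->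
  forall i j, i <= j -> connect (edge A) (r i) (r j).
Proof.
move=> Hr i j /subnK <-; elim: (j - i) => [|k IH]; first exact: connect0.
apply: connect_trans IH (connect1 _); apply/existsP; exists (w (k + i)); exact: Hr.
Qed.

Lemma weak_inf_often_in (S Q : finType) (B : aut S Q) (F : {set Q})
    (w : nat -> S) (r : nat -> Q) :
  acc B = Buchi F -> weak B -> (forall i, r i.+1 \in delta B (r i) (w i)) ->
  forall q q', inf_often r q -> inf_often r q' -> (q \in F) = (q' \in F).
Proof.
rewrite /weak => -> HBw Hr q q' Hq Hq'.
have [i [_ Hi]] := Hq 0; have [j [Hij Hj]] := Hq' i; have [k [Hjk Hk]] := Hq j.
rewrite -Hi -Hj; have Hscc : r j \in scc B (r i).
  by rewrite inE (connect_run Hr) //= Hi -Hk (connect_run Hr).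
have Hii : r i \in scc B (r i) by rewrite inE connect0.
case: (HBw (r i)) => [/subsetP Hsub | Hdis].
  by rewrite (Hsub _ Hii) (Hsub _ Hscc).
by rewrite (disjointFr Hdis Hii) (disjointFr Hdis Hscc).
Qed.

Lemma gfg_lang (S Q : finType) (B : aut S Q) (h : seq S -> Q) : gfg_strategy B h ->
  forall w, lang B w <-> accepting B (fun n => h (prefix w n)).
Proof.
move=> Hh w; split; first exact: (Hh w).2.
by move=> Ha; exists (fun n => h (prefix w n)); split => //; apply: (Hh w).1.
Qed.

(** * The memory structure of a finite-state strategy *)

Section Strategy.
Variables (S Q : finType) (A : aut S Q).
Variables (M : finType) (m0 : M) (rho : M -> S -> M) (tau : M -> Q).
Local Notation g := (tstrat m0 rho tau).

Definition memory (u : seq S) : M := foldl rho m0 u.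

Definition memory_run (w : nat -> S) (n : nat) : M := memory (prefix w n).

(* The memories met along [z] from [nu], the last one excluded: for a loop of A_g, its set of
   elements, whose acceptance is tested by [acc_loop]. *)
Definition visited (nu : M) (z : seq S) : seq M :=
  [seq foldl rho nu (take l z) | l <- iota 0 (size z)].

Definition acc_g (X : M -> Prop) : Prop := acc_set (map_cond tau (acc A)) X.

Definition acc_loop (nu : M) (z : seq S) : Prop := acc_g (fun m => m \in visited nu z).

Lemma memoryE u : g u = tau (memory u).
Proof. by []. Qed.

Lemma memory_rcons u a : memory (rcons u a) = rho (memory u) a.
Proof. exact: foldl_rcons. Qed.

Lemma memory_runD w i l :
  memory_run w (i + l) = foldl rho (memory_run w i) (prefix (fun k => w (i + k)) l).
Proof. by rewrite /memory_run /memory prefixD foldl_cat. Qed.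

Lemma mem_visited nu z m :
  m \in visited nu z <-> exists2 l, l < size z & foldl rho nu (take l z) = m.
Proof.
split; first by case/mapP => l; rewrite mem_iota add0n => Hl ->; exists l.
by case=> l Hl <-; apply: map_f; rewrite mem_iota.
Qed.

Lemma visited_cat nu x y :
  visited nu (x ++ y) =i visited nu x ++ visited (foldl rho nu x) y.
Proof.
move=> m; rewrite mem_cat; apply/idP/orP.
  move/mem_visited => [l Hl <-]; rewrite take_cat; case: ltnP => Hx.
    by left; apply/mem_visited; exists l.
  right; apply/mem_visited; exists (l - size x); last by rewrite foldl_cat.
  by rewrite ltn_subLR // -size_cat.
case=> /mem_visited [l Hl <-]; apply/mem_visited.
  by exists l; rewrite ?size_cat ?take_cat ?Hl ?ltn_addr.
exists (size x + l); first by rewrite size_cat ltn_add2l.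
by rewrite take_cat ltnNge leq_addr /= addKn foldl_cat.
Qed.

Lemma visited_loop_cat nu x y : foldl rho nu x = nu ->
  visited nu (x ++ y) =i visited nu x ++ visited nu y.
Proof. by move=> Lx m; rewrite visited_cat Lx. Qed.

Lemma visited_loop_catC nu x y : foldl rho nu x = nu -> foldl rho nu y = nu ->
  visited nu (x ++ y) =i visited nu (y ++ x).
Proof. by move=> Lx Ly m; rewrite !visited_loop_cat // !mem_cat orbC. Qed.

Lemma acc_loop_eq nu nu' z z' :
  visited nu z =i visited nu' z' -> acc_loop nu z -> acc_loop nu' z'.
Proof. by move=> E; apply: acc_set_ext => m; rewrite E. Qed.

Lemma mpath_word m1 m2 p : mpath rho m1 m2 p -> exists z, foldl rho m1 z = m2.
Proof.
case=> s [_ [Hp <-]]; elim: s m1 Hp => [|m s IH] m1 /=; first by exists [::].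
case/andP => /existsP [a /eqP <-] /IH [z Hz]; by exists (a :: z).
Qed.

Lemma inf_often_memory_loop w nu : inf_often (memory_run w) nu ->
  exists i z, [/\ memory_run w i = nu, 0 < size z, foldl rho nu z = nu &
     forall m, m \in visited nu z <-> inf_often (memory_run w) m].
Proof.
case/inf_often_window => i [j [Hij Hi Hj Hinf]].
pose z := prefix (fun k => w (i + k)) (j - i).
have Hz l : l <= j - i -> foldl rho nu (take l z) = memory_run w (i + l).
  by move=> Hl; rewrite take_prefix // memory_runD Hi.
exists i, z; split => //.
- by rewrite size_prefix subn_gt0.
- by rewrite -[z]take_size Hz size_prefix // subnKC // ltnW.
- move=> m; rewrite Hinf mem_visited size_prefix; split.
    case=> l Hl <-; exists (i + l); last by rewrite Hz // ltnW.
    by rewrite leq_addr -ltn_subRL.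
  case=> k /andP [Hik Hkj] <-; exists (k - i); first by rewrite ltn_sub2rE.
  by rewrite Hz ?subnKC // leq_sub2r // ltnW.
Qed.

Lemma memory_run_limit (St : Type) (a0 : S) (ext : seq S -> St -> seq S * St) P0 s0 s l :
  (forall P s, 0 < size (ext P s).1) ->
  l <= size (ext (stage ext P0 s0 s).1 (stage ext P0 s0 s).2).1 ->
  memory_run (limit_word a0 ext P0 s0) (size (stage ext P0 s0 s).1 + l) =
  foldl rho (memory (stage ext P0 s0 s).1)
    (take l (ext (stage ext P0 s0 s).1 (stage ext P0 s0 s).2).1).
Proof.
move=> HE Hl; rewrite /memory_run (@limit_word_prefix _ _ a0 ext P0 s0 HE s.+1).
  by rewrite stageS take_cat ltnNge leq_addr /= addKn /memory foldl_cat.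
by rewrite stageS size_cat leq_add2l.
Qed.

Lemma memory_stage (St : Type) (ext : seq S -> St -> seq S * St) P0 s0 nu :
  memory P0 = nu -> (forall P s, memory P = nu -> foldl rho nu (ext P s).1 = nu) ->
  forall s, memory (stage ext P0 s0 s).1 = nu.
Proof.
move=> H0 Hext; elim=> // s IH.
by rewrite stageS /memory foldl_cat -/(memory _) IH Hext.
Qed.

Lemma inf_often_memory_limit (St : Type) (a0 : S) (ext : seq S -> St -> seq S * St)
    P0 s0 nu (C : seq M) :
  (forall P s, 0 < size (ext P s).1) -> memory P0 = nu ->
  (forall P s, memory P = nu -> foldl rho nu (ext P s).1 = nu /\ visited nu (ext P s).1 =i C) ->
  forall m, inf_often (memory_run (limit_word a0 ext P0 s0)) m <-> m \in C.
Proof.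
move=> HE H0 Hext.
have Hnu := memory_stage s0 H0 (fun P s HP => (Hext P s HP).1).
apply: (inf_often_blocks (b := fun s => size (stage ext P0 s0 s).1)) => [s|s m|s k].
- exact: size_stage_incr.
- have [_ HC] := Hext _ (stage ext P0 s0 s).2 (Hnu s).
  rewrite -HC => /mem_visited [l Hl <-]; exists (size (stage ext P0 s0 s).1 + l).
    by rewrite leq_addr stageS size_cat ltn_add2l.
  by rewrite memory_run_limit ?Hnu // ltnW.
- rewrite stageS size_cat => /andP [Hk1 Hk2].
  have [_ <-] := Hext _ (stage ext P0 s0 s).2 (Hnu s).
  rewrite -(subnKC Hk1) memory_run_limit ?Hnu //; last by rewrite leq_subLR ltnW.
  by apply/mem_visited; exists (k - size (stage ext P0 s0 s).1); rewrite // ltn_subLR.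
Qed.

Lemma foldl_seqpow nu x n : foldl rho nu x = nu -> foldl rho nu (seqpow x n) = nu.
Proof. by move=> Lx; elim: n => //= n IH; rewrite foldl_cat IH. Qed.

Lemma visited_seqpow nu x n : foldl rho nu x = nu -> visited nu (seqpow x n.+1) =i visited nu x.
Proof.
move=> Lx; elim: n => // n IH m.
rewrite -[seqpow x n.+2]/(seqpow x n.+1 ++ x).
by rewrite (visited_loop_cat _ (foldl_seqpow _ Lx)) mem_cat IH orbb.
Qed.

Definition bad_memory nu := (exists u, memory u = nu) /\
  exists z, [/\ 0 < size z, foldl rho nu z = nu & ~ acc_loop nu z].

Definition good_state q := exists u z, [/\ tau (memory u) = q, 0 < size z,
  foldl rho (memory u) z = memory u & acc_loop (memory u) z].

Lemma rejected_bad_often w : ~ acc_g (inf_often (memory_run w)) ->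
  forall n, exists k, n <= k /\ bad_memory (memory_run w k).
Proof.
move=> Hw; have [N HN] := eventually_inf_often (memory_run w).
have [i [z [Hi Hz Lz Hvis]]] := inf_often_memory_loop (HN N (leqnn N)).
have Hbad : bad_memory (memory_run w N).
  split; first by exists (prefix w i).
  by exists z; split => // Ha; apply: Hw; apply: acc_set_ext Ha.
by move=> n; have [k [Hk Hmk]] := HN N (leqnn N) n; exists k; rewrite Hmk.
Qed.

Lemma accepted_good_often w : acc_g (inf_often (memory_run w)) ->
  exists q, good_state q /\ inf_often (fun n => tau (memory_run w n)) q.
Proof.
move=> Hw; have [N HN] := eventually_inf_often (memory_run w).
have Hnu := HN N (leqnn N).
have [i [z [Hi Hz Lz Hvis]]] := inf_often_memory_loop Hnu.
exists (tau (memory_run w N)); split; last by apply/inf_often_map; exists (memory_run w N).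
exists (prefix w i), z; rewrite -/(memory_run w i) Hi; split => //.
by apply: acc_set_ext Hw => m; rewrite Hvis.
Qed.

Definition good_states : {set Q} := [set q | classicb (good_state q)].

Lemma good_statesP q : reflect (good_state q) (q \in good_states).
Proof. by rewrite inE; apply: classicbP. Qed.

Fixpoint strategy_path (nu : M) (z : seq S) : seq (S * Q) :=
  if z is a :: z' then (a, tau (rho nu a)) :: strategy_path (rho nu a) z' else [::].

Lemma map_fst_strategy_path nu z : map fst (strategy_path nu z) = z.
Proof. by elim: z nu => //= a z IH nu; rewrite IH. Qed.

Lemma size_strategy_path nu z : size (strategy_path nu z) = size z.
Proof. by rewrite -(size_map fst) map_fst_strategy_path. Qed.

Lemma mem_strategy_path nu z q :
  q \in map snd (strategy_path nu z) <->
  exists2 l, 0 < l <= size z & tau (foldl rho nu (take l z)) = q.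
Proof.
elim: z nu => [|a z IH] nu /=; first by split=> [|[[|l]]].
rewrite inE; split=> [/predU1P [->|/IH [l /andP [Hl1 Hl2] Hq]]|[[|l] //= Hl Hq]].
- by exists 1 => //=; rewrite take0.
- by exists l.+1 => /=; rewrite ?ltnS.
case: l Hl Hq => [_ <-|l Hl Hq]; first by rewrite take0 eqxx.
by apply/orP; right; apply/IH; exists l.+1.
Qed.

Lemma strategy_path_loop_states nu z q : foldl rho nu z = nu ->
  q \in map snd (strategy_path nu z) <-> exists m, m \in visited nu z /\ tau m = q.
Proof.
move=> Lz; rewrite mem_strategy_path; split.
  case=> l /andP [Hl1 Hl2] <-; case: (ltngtP l (size z)) Hl2 => // [Hl|Hl] _.
    by exists (foldl rho nu (take l z)); split => //; apply/mem_visited; exists l.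
  exists nu; rewrite Hl take_size Lz; split => //; apply/mem_visited; exists 0.
    by rewrite -Hl.
  by rewrite take0.
case=> m [/mem_visited [[|l] Hl <-] <-].
  by exists (size z); rewrite ?Hl ?leqnn // take_size take0 Lz.
by exists l.+1 => //=; apply: ltnW.
Qed.

Hypothesis g_gfg : gfg_strategy A g.

Lemma strategy_init (a : S) : tau m0 \in init A.
Proof. by have [[]] := g_gfg (fun _ => a). Qed.

Lemma strategy_step u a : tau (rho (memory u) a) \in delta A (tau (memory u)) a.
Proof.
have [[_ Hstep] _] := g_gfg (cat_word u (fun _ => a)).
have := Hstep (size u); rewrite -[size u]addn0 -addnS !prefix_cat_word cat_wordDr.
by rewrite /= cats0 cats1 !memoryE memory_rcons.
Qed.

Lemma lang_acc_g w : lang A w <-> acc_g (inf_often (memory_run w)).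
Proof.
have acc_run : accepting A (fun n => g (prefix w n)) <-> acc_g (inf_often (memory_run w)).
  rewrite /acc_g acc_set_map_cond; split; apply: acc_set_ext => q;
    by rewrite (inf_often_map (memory_run w) tau).
by rewrite -acc_run; apply: gfg_lang.
Qed.

Lemma strategy_good_often w : lang A w ->
  exists q, q \in good_states /\ inf_often (fun n => g (prefix w n)) q.
Proof.
move=> /lang_acc_g /accepted_good_often [q [Hq Hinf]].
by exists q; split => //; apply/good_statesP.
Qed.

Lemma path_strategy_path p u z : p.2 = tau (memory u) ->
  path (astep A) p (strategy_path (memory u) z) /\
  (last p (strategy_path (memory u) z)).2 = tau (foldl rho (memory u) z).
Proof.
elim: z u p => [|b z IH] u p Hp //=; rewrite -memory_rcons.
have [Hpath Hl] := IH (rcons u b) (b, tau (memory (rcons u b))) erefl.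
by rewrite Hl /astep /= Hp memory_rcons strategy_step -memory_rcons.
Qed.

Lemma accepts_from_strategy u t : lang A (cat_word u t) -> accepts_from A (g u) t.
Proof.
move=> /((g_gfg _).2) Ha; have [[_ Hr] _] := g_gfg (cat_word u t).
exists (fun i => g (prefix (cat_word u t) (size u + i))); split.
- by rewrite prefix_cat_word cats0.
- by move=> i; have := Hr (size u + i); rewrite addnS cat_wordDr.
- apply: acc_set_ext Ha => q; apply: (inf_often_shift (n := size u)) => i.
  by rewrite addnC.
Qed.

Lemma lang_of_accepts_from_strategy u t : accepts_from A (g u) t -> lang A (cat_word u t).
Proof.
have [[H0 Hr] _] := g_gfg (cat_word u t).
move=> Ht; apply: (lang_of_accepts_from H0 Hr (n := size u)).
rewrite -[size u]addn0 prefix_cat_word cats0; apply: accepts_from_ext Ht => i.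
by rewrite addn0 addnC cat_wordDr.
Qed.

(** * Loops at a reachable memory *)

Section Pumping.
Variables (u0 x y : seq S) (a0 : S).
Local Notation nu := (memory u0).
Hypotheses (x_nonempty : 0 < size x) (x_loop : foldl rho nu x = nu) (y_loop : foldl rho nu y = nu).

Local Notation x_ext := (fun (_ : seq S) (_ : unit) => (x, tt)).

Definition loop_word P := limit_word a0 x_ext P tt.

Lemma prefix_loop_word P n k : k <= size P + n * size x ->
  prefix (loop_word P) k = take k (P ++ seqpow x n).
Proof.
have stageE : (stage x_ext P tt n).1 = P ++ seqpow x n.
  by elim: n => [|n IH]; rewrite ?cats0 // stageS IH catA.
by move=> Hk; rewrite (@limit_word_prefix _ _ a0 x_ext P tt (fun _ _ => x_nonempty) n) stageE //
  size_cat size_seqpow.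
Qed.

Lemma lang_loop_word P : memory P = nu -> lang A (loop_word P) <-> acc_loop nu x.
Proof.
move=> HP; rewrite lang_acc_g.
have Hinf := inf_often_memory_limit a0 (ext := x_ext) (C := visited nu x) tt
  (fun _ _ => x_nonempty) HP
  (fun _ _ _ => conj x_loop (fun m => erefl)).
by split; apply: acc_set_ext => m; rewrite Hinf.
Qed.

(* The witness is u0 x^(n_1+1) y x^(n_2+1) y ..., where each n_i is chosen so large that, for
   the prefix P built so far, [Pr] holds at some position of P x^omega within n_i copies of x. *)
Lemma pump (Y : Type) (h : seq S -> Y) (Pr : Y -> Prop) :
  (forall P, memory P = nu -> exists2 k, size P <= k & Pr (h (prefix (loop_word P) k))) ->
  exists W, (lang A W <-> acc_loop nu (x ++ y)) /\
            forall n, exists k, n <= k /\ Pr (h (prefix W k)).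
Proof.
move=> HPr.
pose ok P n := exists k, size P <= k < size P + n * size x /\ Pr (h (prefix (loop_word P) k)).
pose nf P := epsilon (inhabits 0) (ok P).
have Hnf P : memory P = nu -> ok P (nf P).
  move=> HP; apply: epsilon_spec; have [k Hk Pk] := HPr P HP.
  exists k.+1, k; split => //; rewrite Hk /=.
  exact: leq_trans (leq_pmulr _ x_nonempty) (leq_addl _ _).
pose ext P (_ : unit) := (seqpow x (nf P).+1 ++ y, tt).
have HE P s : 0 < size (ext P s).1.
  by rewrite size_cat size_seqpow addn_gt0 muln_gt0 x_nonempty.
have block_loop P s : foldl rho nu (ext P s).1 = nu by rewrite foldl_cat foldl_seqpow.
have block_visited P s : visited nu (ext P s).1 =i visited nu x ++ visited nu y.
  by move=> m; rewrite visited_loop_cat ?foldl_seqpow // !mem_cat visited_seqpow.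
have Hstage := memory_stage tt (erefl nu) (fun P s _ => block_loop P s).
exists (limit_word a0 ext u0 tt); split.
  have Hinf := inf_often_memory_limit a0 tt HE (erefl nu)
    (fun P s _ => conj (block_loop P s) (block_visited P s)).
  by rewrite lang_acc_g; split; apply: acc_set_ext => m; rewrite Hinf (visited_loop_cat y x_loop).
apply: (often_of_blocks (b := fun s => size (stage ext u0 tt s).1)) => s.
  exact: size_stage_incr.
set P := (stage ext u0 tt s).1; have [k [/andP [Hk1 Hk2] Pk]] := Hnf P (Hstage s).
have Hk : k < size (P ++ seqpow x (nf P).+1).
  apply: leq_trans Hk2 _.
  by rewrite size_cat size_seqpow leq_add2l leq_mul2r leqnSn orbT.
exists k; first by rewrite Hk1 stageS -/P /= catA size_cat ltn_addr.
have Hpre : prefix (loop_word P) k = take k (P ++ seqpow x (nf P).+1).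
  by apply: prefix_loop_word; rewrite -size_seqpow -size_cat ltnW.
rewrite (@limit_word_prefix _ _ a0 ext u0 tt HE s.+1); last first.
  by rewrite stageS -/P /= catA size_cat ltnW // ltn_addr.
by rewrite stageS -/P /= catA (takel_cat _ (ltnW Hk)) -Hpre.
Qed.

End Pumping.

Section WeakWitness.
Variables (Q' : finType) (B : aut S Q').
Hypotheses (B_weak : weak B) (B_gfg : GFG B) (B_equiv : forall w, lang B w <-> lang A w).

(* If exactly one of [x] and [x ++ y] is accepting, pumping produces a word on which the run
   of the GFG strategy of B visits both accepting and rejecting states infinitely often. *)
Lemma acc_loop_cat u0 x y : 0 < size x ->
  foldl rho (memory u0) x = memory u0 -> foldl rho (memory u0) y = memory u0 ->
  acc_loop (memory u0) x <-> acc_loop (memory u0) (x ++ y).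
Proof.
case: x => // a x' Hx Lx Ly; set x := a :: x' in Lx *.
have [h Hh] := B_gfg; have B_weak' := B_weak; rewrite /weak in B_weak'.
case HF: (acc B) B_weak' => [||F] // _.
pose hrun w n := h (prefix w n).
have langF w : lang A w <-> exists2 f, f \in F & inf_often (hrun w) f.
  rewrite -B_equiv (gfg_lang Hh) /accepting HF /=.
  by split=> [[f []]|[f]]; exists f.
split=> Hacc.
  have hits_F P : memory P = memory u0 -> exists2 k, size P <= k & hrun (loop_word x a P) k \in F.
    move=> HP; have /langF [f Hf Hinf] : lang A (loop_word x a P).
      by apply/(lang_loop_word a Hx Lx HP).
    by have [k [Hk Hfk]] := Hinf (size P); exists k; rewrite // Hfk.
  have [W [HW often_F]] := pump (h := h) (Pr := fun q => q \in F) Hx Lx Ly hits_F.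
  apply/HW/langF.
  by have [f [Hf Hinf]] := @inf_often_pigeonhole _ (hrun W) (fun q => q \in F) often_F; exists f.
apply: NNPP => Hrej.
have leaves_F P : memory P = memory u0 ->
    exists2 k, size P <= k & hrun (loop_word x a P) k \notin F.
  move=> HP; apply: NNPP => Hno; apply: Hrej.
  apply/(lang_loop_word a Hx Lx HP)/langF.
  have [n|f [Hf Hinf]] := @inf_often_pigeonhole _ (hrun (loop_word x a P)) (fun q => q \in F).
    exists (maxn n (size P)); split; first exact: leq_maxl.
    by apply: NNPP => HnF; apply: Hno; exists (maxn n (size P)); rewrite ?leq_maxr //; apply/negP.
  by exists f.
have [W [HW often_notF]] := pump (h := h) (Pr := fun q => q \notin F) Hx Lx Ly leaves_F.
have /langF [f Hf Hinf] := proj2 HW Hacc.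
have [f' [Hf' Hinf']] := @inf_often_pigeonhole _ (hrun W) (fun q => q \notin F) often_notF.
have := weak_inf_often_in HF B_weak (Hh W).1.2 Hinf Hinf'.
by rewrite Hf (negbTE Hf').
Qed.

Lemma accepted_not_bad w nu : acc_g (inf_often (memory_run w)) ->
  inf_often (memory_run w) nu -> ~ bad_memory nu.
Proof.
move=> Hw Hnu [[u Hu] [z' [Hz' Lz' Hrej]]].
have [i [z [_ Hz Lz Hvis]]] := inf_often_memory_loop Hnu.
have Hacc : acc_loop nu z by apply: acc_set_ext Hw => m; rewrite Hvis.
rewrite -Hu in Lz Lz' Hacc Hrej; apply: Hrej.
apply/(acc_loop_cat Hz' Lz' Lz); apply: acc_loop_eq (visited_loop_catC Lz Lz') _.
exact/(acc_loop_cat Hz Lz Lz').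
Qed.

(** * Consequences of tightness *)

Section Tight.
Hypothesis g_uses_all :
  forall q a q', q' \in delta A q a -> exists u, g u = q /\ g (rcons u a) = q'.
Hypothesis no_replaceable : forall m m', ~ replaceable (acc A) rho tau m m'.

Lemma delta_memory q a q' : q' \in delta A q a -> exists u, tau (memory u) = q'.
Proof. by case/g_uses_all => u [_ Hu]; exists (rcons u a). Qed.

Lemma reach_same_state m1 m2 : tau m1 = tau m2 -> exists z, foldl rho m1 z = m2.
Proof.
move=> Ht; case: (eqVneq m2 m1) => [->|Hne]; first by exists [::].
apply: NNPP => Hn; apply: (no_replaceable (m := m2) (m' := m1)); split=> //; split=> //.
by left=> p /mpath_word [z Hz]; apply: Hn; exists z.
Qed.

Lemma reach_connect m1 m2 : connect (edge A) (tau m1) (tau m2) -> exists z, foldl rho m1 z = m2.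
Proof.
case/connectP => s; elim: s m1 => [|q s IH] m1 /=; first by move=> _ /esym/reach_same_state.
case/andP => /existsP [a /g_uses_all [u [Hu1 Hu2]]] Hp Hl.
have [x1 Hx1] := reach_same_state (m1 := m1) (m2 := memory u) (esym Hu1).
have [x2 Hx2] : exists z, foldl rho (memory (rcons u a)) z = m2 by apply: IH; rewrite -memoryE Hu2.
by exists (x1 ++ a :: x2); rewrite foldl_cat Hx1 /= -Hx2 memory_rcons.
Qed.

Lemma connect_memory u q : connect (edge A) (tau (memory u)) q -> exists u', tau (memory u') = q.
Proof.
case/connectP => s; case/lastP: s => [|s q'] /=; first by move=> _ ->; exists u.
rewrite rcons_path last_rcons => /andP [_ /existsP [a]] /delta_memory [u' Hu'] ->.
by exists u'.
Qed.

Lemma good_state_scc q1 q2 : good_state q1 ->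
  connect (edge A) q1 q2 -> connect (edge A) q2 q1 -> good_state q2.
Proof.
move=> [u1 [z [Hq1 Hz Lz Hacc]]] H12 H21.
have [u2 Hq2] : exists u, tau (memory u) = q2 by apply: (connect_memory (u := u1)); rewrite Hq1.
have [p12 L12] : exists p, foldl rho (memory u1) p = memory u2.
  by apply: reach_connect; rewrite Hq1 Hq2.
have [p21 L21] : exists p, foldl rho (memory u2) p = memory u1.
  by apply: reach_connect; rewrite Hq1 Hq2.
have L121 : foldl rho (memory u1) (p12 ++ p21) = memory u1 by rewrite foldl_cat L12.
exists u2, (p21 ++ z ++ p12); split => //.
- by rewrite !size_cat addnCA ltn_addr.
- by rewrite !foldl_cat L21 Lz.
apply: acc_loop_eq (proj1 (acc_loop_cat Hz Lz L121) Hacc) => m.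
rewrite !visited_cat !mem_cat Lz L21 !visited_cat !mem_cat L12 Lz.
by rewrite [RHS]orbC -orbA.
Qed.

Lemma good_states_weak q : scc A q \subset good_states \/ [disjoint scc A q & good_states].
Proof.
case: (boolP [disjoint scc A q & good_states]) => [|/pred0Pn [q1 /andP [Hq1 Hg1]]];
  [by right | left].
have /good_statesP {}Hg1 : q1 \in good_states := Hg1.
have : q1 \in scc A q := Hq1.
rewrite inE => /andP [H1 H1']; apply/subsetP => q2; rewrite inE => /andP [H2 H2'].
by apply/good_statesP; apply: good_state_scc Hg1 _ _; apply: connect_trans; eassumption.
Qed.

Lemma accepts_from_delta q a p t : p \in delta A q a ->
  accepts_from A q (cat_word [:: a] t) -> accepts_from A p t.
Proof.
case/g_uses_all => u [<- <-] /lang_of_accepts_from_strategy Hu.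
apply: accepts_from_strategy; apply: lang_ext Hu => i.
by rewrite -cats1 cat_word_cat.
Qed.

Lemma accepts_from_path p0 l t : path (astep A) p0 l ->
  accepts_from A p0.2 (cat_word (map fst l) t) -> accepts_from A (last p0 l).2 t.
Proof.
elim: l p0 => [|p l IH] p0 /=.
  by move=> _; apply: accepts_from_ext => i; rewrite /cat_word /= subn0.
case/andP => Hp Hl Ht; apply: IH Hl _; apply: (accepts_from_delta Hp).
by apply: accepts_from_ext Ht => i; rewrite -cat_word_cat.
Qed.

Lemma covering_loop u x (L : seq Q) : 0 < size x -> foldl rho (memory u) x = memory u ->
  (forall q', q' \in L ->
     connect (edge A) (tau (memory u)) q' /\ connect (edge A) q' (tau (memory u))) ->
  exists z, foldl rho (memory u) z = memory u /\
     forall q', q' \in L -> exists m, m \in visited (memory u) z /\ tau m = q'.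
Proof.
move=> Hx Lx; elim: L => [|q' L IH] HL; first by exists [::].
have [z [Lz Hcov]] : exists z, foldl rho (memory u) z = memory u /\
    forall q'', q'' \in L -> exists m, m \in visited (memory u) z /\ tau m = q''.
  by apply: IH => q'' Hq''; apply: HL; rewrite inE Hq'' orbT.
have [Hto Hfrom] := HL q' (mem_head _ _).
have [u' Hu'] := connect_memory Hto.
have [p1 L1] : exists p, foldl rho (memory u) p = memory u' by apply: reach_connect; rewrite Hu'.
have [p2 L2] : exists p, foldl rho (memory u') p = memory u by apply: reach_connect; rewrite Hu'.
exists (z ++ p1 ++ p2 ++ x); split; first by rewrite !foldl_cat Lz L1 L2.
move=> q''; rewrite inE => /predU1P [->|/Hcov [m [Hm <-]]].
  exists (memory u'); rewrite visited_cat mem_cat Lz; split => //; apply/orP; right.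
  apply/mem_visited; exists (size p1); last by rewrite take_size_cat.
  by rewrite !size_cat -[X in X < _]addn0 ltn_add2l addn_gt0 Hx orbT.
by exists m; rewrite visited_cat mem_cat Hm.
Qed.

Lemma good_often_covering_loop w r q : (forall i, r i.+1 \in delta A (r i) (w i)) ->
  good_state q -> inf_often r q ->
  exists u y, [/\ inf_often r (tau (memory u)), 0 < size y, foldl rho (memory u) y = memory u,
    acc_loop (memory u) y &
    forall q', inf_often r q' -> exists m, m \in visited (memory u) y /\ tau m = q'].
Proof.
move=> Hr [u [x [<- Hx Lx Hacc]]] Hq.
pose L := [seq q' <- enum Q | classicb (inf_often r q')].
have HL q' : q' \in L ->
    connect (edge A) (tau (memory u)) q' /\ connect (edge A) q' (tau (memory u)).
  rewrite mem_filter mem_enum andbT => /classicbP Hq'.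
  have [i [_ Hi]] := Hq 0; have [j [Hij Hj]] := Hq' i; have [k [Hjk Hk]] := Hq j.
  by rewrite -Hi -Hj (connect_run Hr) // Hi -Hk (connect_run Hr).
have [z [Lz Hz]] := covering_loop Hx Lx HL.
exists u, (x ++ z); split => //.
- by rewrite size_cat ltn_addr.
- by rewrite foldl_cat Lx.
- exact/(acc_loop_cat Hx Lx Lz).
move=> q' Hq'; have [|m [Hm <-]] := Hz q'.
  by rewrite mem_filter mem_enum andbT; apply/classicbP.
by exists m; rewrite visited_cat mem_cat Lx Hm orbT.
Qed.

(* A run [r] on a rejected word [w] visits [q = tau (memory u)] infinitely often, and [y] is an
   accepting loop at [memory u] through the states recurring in [r].  The word built below reads
   [u], then alternates a segment of [r] between two visits to [q] with [y].  Each segment is long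
   enough for g, which must reject (prefix so far)(rest of w), to meet a bad memory. *)
Section Interleave.
Variables (w : nat -> S) (r : nat -> Q) (u y : seq S) (N0 n0 : nat).
Local Notation mu := (memory u).
Local Notation q := (tau (memory u)).
Hypotheses (r_init : r 0 \in init A) (r_step : forall i, r i.+1 \in delta A (r i) (w i)).
Hypotheses (w_rejected : ~ lang A w) (q_often : inf_often r q).
Hypotheses (y_nonempty : 0 < size y) (y_loop : foldl rho mu y = mu) (y_acc : acc_loop mu y).
Hypothesis y_covers : forall q', inf_often r q' -> exists m, m \in visited mu y /\ tau m = q'.
Hypotheses (N0_inf : forall i, N0 <= i -> inf_often r (r i)) (n0_q : r n0 = q) (N0_n0 : N0 <= n0).

Local Notation p0 := (w 0, tau m0).
Local Notation shift n := (fun i => w (i + n)).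

Definition stage_inv (P : seq (S * Q)) (n : nat) :=
  [/\ path (astep A) p0 P, (last p0 P).2 = q, r n = q & N0 <= n].

Lemma rejected_continuation P n : stage_inv P n -> ~ lang A (cat_word (map fst P) (shift n)).
Proof.
case=> HP HPq Hn _ Hl; apply: w_rejected; apply: (lang_of_accepts_from r_init r_step (n := n)).
rewrite Hn -HPq; apply: accepts_from_path HP _; apply: (accepts_from_strategy (u := [::])).
by apply: lang_ext Hl => i; rewrite /cat_word /= subn0.
Qed.

Definition next_spec (P : seq (S * Q)) (n n' : nat) :=
  [/\ n < n', r n' = q & exists2 k, size P <= k <= size P + (n' - n) &
        bad_memory (memory_run (cat_word (map fst P) (shift n)) k)].

Definition next_visit P n := epsilon (inhabits 0) (next_spec P n).

Lemma next_visitP P n : stage_inv P n -> next_spec P n (next_visit P n).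
Proof.
move=> Hinv; apply: epsilon_spec.
have := rejected_continuation Hinv; rewrite lang_acc_g.
move=> /rejected_bad_often /(_ (size P)) [k [Hk Hbad]].
have [n' [Hn' Hrn']] := q_often (maxn n.+1 (n + (k - size P))).
have Hnn' : n < n' by apply: leq_trans Hn'; apply: leq_maxl.
exists n'; split => //; exists k => //; rewrite Hk -leq_subLR leq_subRL ?(ltnW Hnn') //.
by apply: leq_trans Hn'; apply: leq_maxr.
Qed.

Definition interleave_ext (P : seq (S * Q)) (n : nat) :=
  (run_segment w r n (next_visit P n - n) ++ strategy_path mu y, next_visit P n).

Local Notation stg := (stage interleave_ext (strategy_path m0 u) n0).

Lemma interleave_ext_nonempty P n : 0 < size (interleave_ext P n).1.
Proof. by rewrite size_cat size_strategy_path addn_gt0 y_nonempty orbT. Qed.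

Lemma stage_invP s : stage_inv (stg s).1 (stg s).2.
Proof.
elim: s => [|s IH].
  by have [Hp Hl] := path_strategy_path (u := [::]) u (p := p0) erefl; split.
have [Hlt Hrn' _] := next_visitP IH; case: IH => HP HPq Hn HN.
rewrite stageS /=; set n' := next_visit _ _.
set seg := run_segment w r (stg s).2 (n' - (stg s).2).
have [Hseg Hseg_last] := path_run_segment (n' - (stg s).2) r_step (p := last p0 (stg s).1)
  (etrans HPq (esym Hn)).
rewrite subnKC ?(ltnW Hlt) // Hrn' in Hseg_last.
have [Hy Hy_last] := path_strategy_path y (p := last (last p0 (stg s).1) seg) Hseg_last.
split => //.
- by rewrite !cat_path HP Hseg Hy.
- by rewrite !last_cat Hy_last y_loop.
- exact: leq_trans HN (ltnW Hlt).
Qed.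

Definition interleave_word : nat -> S * Q :=
  limit_word (w 0, q) interleave_ext (strategy_path m0 u) n0.

Local Notation Wp := interleave_word.

Lemma interleave_run : is_run A (fun i => (Wp i).1) (fun i => (last p0 (prefix Wp i)).2).
Proof.
apply: run_of_paths; first exact: (strategy_init (w 0)).
move=> k; rewrite (limit_word_prefix _ interleave_ext_nonempty (n := k)).
  by apply: take_path; case: (stage_invP k).
exact: size_stage_ge interleave_ext_nonempty k.
Qed.

Lemma interleave_states q' :
  inf_often (fun i => (Wp i).2) q' <-> exists m, m \in visited mu y /\ tau m = q'.
Proof.
have Hblock := @limit_word_block _ _ (w 0, q) _ (strategy_path m0 u) n0 interleave_ext_nonempty.
apply: (@inf_often_blocks _ _ (fun s => size (stg s).1) _
  (fun q' => exists m, m \in visited mu y /\ tau m = q')) => [s|s q'' Hq''|s k /andP [Hk1 Hk2]].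
- exact: size_stage_incr interleave_ext_nonempty _.
- have /mapP [p Hp ->] := proj2 (strategy_path_loop_states _ y_loop) Hq''.
  have /(nthP (w 0, q)) [j Hj Hpj] := Hp.
  set seg := run_segment w r (stg s).2 (next_visit (stg s).1 (stg s).2 - (stg s).2).
  have Hblk : (interleave_ext (stg s).1 (stg s).2).1 = seg ++ strategy_path mu y by [].
  have Hseg_j : size seg + j < size (interleave_ext (stg s).1 (stg s).2).1.
    by rewrite Hblk size_cat ltn_add2l.
  exists (size (stg s).1 + (size seg + j)).
    by rewrite leq_addr stageS size_cat ltn_add2l.
  by rewrite /interleave_word (Hblock _ _ Hseg_j) Hblk nth_cat ltnNge leq_addr /= addKn Hpj.
- move: Hk2; rewrite stageS size_cat -{1}(subnKC Hk1) ltn_add2l => Hj.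
  rewrite -(subnKC Hk1) /interleave_word (Hblock _ _ Hj).
  have := mem_nth (w 0, q) Hj; rewrite /= mem_cat => /orP [/run_segment_states [i [Hi ->]]|Hp].
    apply: y_covers; apply: N0_inf; apply: leq_trans (leqnSn i).
    by case: (stage_invP s) => _ _ _ HN; apply: leq_trans HN Hi.
  by apply/(strategy_path_loop_states _ y_loop); apply: map_f.
Qed.

Lemma interleave_accepted : lang A (fun i => (Wp i).1).
Proof.
exists (fun i => (last p0 (prefix Wp i)).2); split; first exact: interleave_run.
move: y_acc; rewrite /acc_loop /acc_g acc_set_map_cond; apply: acc_set_ext => q'.
rewrite -interleave_states; apply: iff_sym; apply: (inf_often_shift (n := 1)) => i.
by rewrite addn1 prefixS last_rcons.
Qed.

Lemma interleave_bad_often :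
  forall n, exists k, n <= k /\ bad_memory (memory_run (fun i => (Wp i).1) k).
Proof.
apply: (often_of_blocks (b := fun s => size (stg s).1)) => [s|s].
  exact: size_stage_incr interleave_ext_nonempty _.
have [Hlt _ [k /andP [Hk1 Hk2] Hbad]] := next_visitP (stage_invP s).
set P := (stg s).1 in Hk1 Hk2 Hbad *; set n := (stg s).2 in Hlt Hk2 Hbad *.
set seg := run_segment w r n (next_visit P n - n).
have Hkseg : k <= size (P ++ seg) by rewrite size_cat size_run_segment.
exists k.
  rewrite Hk1 stageS -/P -/n /= catA size_cat; apply: leq_ltn_trans Hkseg _.
  by rewrite -addn1 leq_add2l size_strategy_path.
congr (bad_memory (memory _)): Hbad.
have -> : prefix (fun i => (Wp i).1) k = map fst (prefix Wp k).
  by rewrite /prefix /mkseq -map_comp.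
rewrite (limit_word_prefix _ interleave_ext_nonempty (n := s.+1)); last first.
  by rewrite stageS -/P -/n /= catA size_cat; apply: leq_trans Hkseg (leq_addr _ _).
rewrite stageS -/P -/n /= catA (takel_cat _ Hkseg) map_take map_cat map_fst_run_segment.
rewrite -(size_map fst P) in Hk2; rewrite -prefix_cat_word take_prefix //.
Qed.

End Interleave.

Lemma lang_of_good_often w r : is_run A w r ->
  (exists q, q \in good_states /\ inf_often r q) -> lang A w.
Proof.
move=> [r_init r_step] [q [/good_statesP Hq Hinf]].
have [u [y [q_often Hy Ly Hacc Hcov]]] := good_often_covering_loop r_step Hq Hinf.
apply: NNPP => w_rej.
have [N0 HN0] := eventually_inf_often r; have [n0 [Hn0 Hrn0]] := q_often N0.
have /lang_acc_g Hacc_W :=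
  interleave_accepted r_init r_step w_rej q_often Hy Ly Hacc Hcov HN0 Hrn0 Hn0.
have [nu [Hbad Hnu]] := inf_often_pigeonhole
  (interleave_bad_often r_init r_step w_rej q_often Hy Ly Hrn0 Hn0).
exact: accepted_not_bad Hacc_W Hnu Hbad.
Qed.

Lemma good_often_iff_lang w :
  (exists r, is_run A w r /\ exists q, q \in good_states /\ inf_often r q) <-> lang A w.
Proof.
split=> [[r [Hr Hgood]]|Hw]; first exact: lang_of_good_often Hr Hgood.
by exists (fun n => g (prefix w n)); split; [apply: (g_gfg w).1 | apply: strategy_good_often].
Qed.

End Tight.
End WeakWitness.
End Strategy.

Theorem corollary19 (Sigma Q : finType) (A : aut Sigma Q) :
  (is_streett A || is_rabin A) ->
  GFG A -> tight A -> GFG_NWW_recognizable A ->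
  exists alpha' : {set Q},
    let A' := Aut (init A) (delta A) (Buchi alpha') in
    weak A' /\ GFG A' /\ forall w, lang A' w <-> lang A w.
Proof.
move=> _ _ [M [m0 [rho [tau [g_gfg [g_uses_all no_repl]]]]]] [Q' [B [B_weak [B_gfg B_equiv]]]].
have good_lang := good_often_iff_lang g_gfg B_weak B_gfg B_equiv g_uses_all no_repl.
exists (good_states A m0 rho tau) => /=; split; last split.
- exact: (good_states_weak g_gfg B_weak B_gfg B_equiv g_uses_all no_repl).
- exists (tstrat m0 rho tau) => w; split; first exact: (g_gfg w).1.
  by move/good_lang/(strategy_good_often g_gfg).
- exact: good_lang.
Qed.
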